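(* Let $n$ be a power of two, $\Delta=50+1000\log n$ and $m=1000\Delta^2$. There exists a function $h:\{0,1\}^{\le 3\Delta}\to\{0,1,\dots,m-1\}$ such that for all $z\in\{0,1\}^{\le 3\Delta}$ and all $z'\neq z$ obtained from $z$ by at most two adjacent transpositions, or by at most two substitutions, or by at most one deletion and at most one insertion, we have $h(z)\neq h(z')$.
   Context: Logarithms are base $2$. $\{0,1\}^{\le k}$ is the set of binary strings of length at most $k$. An adjacent transposition swaps two consecutive coordinates; a substitution flips one bit; a deletion removes one coordinate; an insertion adds one bit at some position. *)

From mathcomp Require Import all_boot.
Set Implicit Arguments. Unset Strict Implicit. Unset Printing Implicit Defensive.

Definition adj_transp (z z' : seq bool) : Prop :=
  exists i, i.+1 < size z /\
    z' = take i z ++ [:: nth false z i.+1; nth false z i] ++ drop i.+2 z.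

Definition substitution (z z' : seq bool) : Prop :=
  exists i, i < size z /\ z' = set_nth false z i (~~ nth false z i).

Definition deletion (z z' : seq bool) : Prop :=
  exists i, i < size z /\ z' = take i z ++ drop i.+1 z.

Definition insertion (z z' : seq bool) : Prop :=
  exists i b, i <= size z /\ z' = take i z ++ b :: drop i z.

Definition opt (R : seq bool -> seq bool -> Prop) z z' : Prop := z' = z \/ R z z'.

Definition rcomp (R1 R2 : seq bool -> seq bool -> Prop) z z' : Prop :=
  exists y, R1 z y /\ R2 y z'.

Definition close_edit (z z' : seq bool) : Prop :=
  rcomp (opt adj_transp) (opt adj_transp) z z' \/
  rcomp (opt substitution) (opt substitution) z z' \/
  rcomp (opt deletion) (opt insertion) z z' \/
  rcomp (opt insertion) (opt deletion) z z'.

From mathcomp Require Import all_boot.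
From mathcomp Require Import zify.
Set Implicit Arguments. Unset Strict Implicit. Unset Printing Implicit Defensive.

(* Each allowed change is a composition of at most two single edits (swap,
   flip, deletion, insertion), and single edits are closed under inversion.
   A string of length l has 5 l + 3 strings within one edit of it (itself
   included), hence at most (5 l + 3) (5 l + 8) within two edits, which for
   l <= 3 Delta is less than m = 1000 Delta^2.  So the confusability graph on
   the finitely many strings of length <= 3 Delta has degree < m and a greedy
   colouring with m colours gives h. *)

Section ListSplitting.
Variables (T : Type) (x0 : T).

Lemma take_nth_drop (s : seq T) i : i < size s ->
  s = take i s ++ nth x0 s i :: drop i.+1 s.
Proof. by move=> lt_i; rewrite -drop_nth // cat_take_drop. Qed.

Lemma take_nth2_drop (s : seq T) i : i.+1 < size s ->
  s = take i s ++ nth x0 s i :: nth x0 s i.+1 :: drop i.+2 s.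
Proof. by move=> lt_i; rewrite -!drop_nth ?(ltnW lt_i) // cat_take_drop. Qed.

Lemma drop_add_size_cat (a s : seq T) k : drop (k + size a) (a ++ s) = drop k s.
Proof. by rewrite -drop_drop drop_size_cat. Qed.

Lemma nth_add_size_cat (a s : seq T) k : nth x0 (a ++ s) (k + size a) = nth x0 s k.
Proof. by rewrite nth_cat ltnNge leq_addl addnK. Qed.

End ListSplitting.

Definition infix_edit (u v z z' : seq bool) : Prop :=
  exists a b, z = a ++ u ++ b /\ z' = a ++ v ++ b.

Lemma infix_edit_sym u v z z' : infix_edit u v z z' -> infix_edit v u z' z.
Proof. by case=> a [b [-> ->]]; exists a, b. Qed.

Lemma adj_transpE z z' :
  adj_transp z z' <-> exists p q, infix_edit [:: p; q] [:: q; p] z z'.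
Proof.
split=> [[i [lt_i ->]]|[p [q [a [b [-> ->]]]]]].
  exists (nth false z i), (nth false z i.+1), (take i z), (drop i.+2 z).
  by split=> //; apply: take_nth2_drop.
exists (size a); split; first by rewrite size_cat /=; lia.
by rewrite take_size_cat // (nth_add_size_cat _ _ _ 1) (nth_add_size_cat _ _ _ 0)
  (drop_add_size_cat _ _ 2) /= drop0.
Qed.

Lemma substitutionE z z' :
  substitution z z' <-> exists p, infix_edit [:: p] [:: ~~ p] z z'.
Proof.
split=> [[i [lt_i ->]]|[p [a [b [-> ->]]]]].
  exists (nth false z i), (take i z), (drop i.+1 z).
  by rewrite set_nthE lt_i; split=> //; apply: take_nth_drop.
have lt_a : size a < size (a ++ [:: p] ++ b) by rewrite size_cat /=; lia.
exists (size a); rewrite set_nthE lt_a; split=> //.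
by rewrite take_size_cat // (nth_add_size_cat _ _ _ 0) (drop_add_size_cat _ _ 1) /= drop0.
Qed.

Lemma deletionE z z' :
  deletion z z' <-> exists p, infix_edit [:: p] [::] z z'.
Proof.
split=> [[i [lt_i ->]]|[p [a [b [-> ->]]]]].
  exists (nth false z i), (take i z), (drop i.+1 z).
  by split=> //; apply: take_nth_drop.
exists (size a); split; first by rewrite size_cat /=; lia.
by rewrite take_size_cat // (drop_add_size_cat _ _ 1) /= drop0.
Qed.

Lemma insertionE z z' :
  insertion z z' <-> exists p, infix_edit [::] [:: p] z z'.
Proof.
split=> [[i [p [le_i ->]]]|[p [a [b [-> ->]]]]].
  by exists p, (take i z), (drop i z); rewrite cat_take_drop.
exists (size a), p; rewrite size_cat leq_addr.
by rewrite take_size_cat // drop_size_cat.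
Qed.

Definition single_edit (z z' : seq bool) : Prop :=
  adj_transp z z' \/ substitution z z' \/ deletion z z' \/ insertion z z'.

Lemma single_edit_sym z z' : single_edit z z' -> single_edit z' z.
Proof.
case=> [/adj_transpE [p [q /infix_edit_sym e]]|[/substitutionE [p /infix_edit_sym e]|
        [/deletionE [p /infix_edit_sym e]|/insertionE [p /infix_edit_sym e]]]].
- by left; apply/adj_transpE; exists q, p.
- by right; left; apply/substitutionE; exists (~~ p); rewrite negbK.
- by do 3 right; apply/insertionE; exists p.
- by right; right; left; apply/deletionE; exists p.
Qed.

Lemma opt_sym (R : seq bool -> seq bool -> Prop) z z' :
  (forall y y', R y y' -> R y' y) -> opt R z z' -> opt R z' z.
Proof. by move=> R_sym [->|/R_sym]; [left|right]. Qed.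

Lemma opt_sub (R R' : seq bool -> seq bool -> Prop) z z' :
  (forall y y', R y y' -> R' y y') -> opt R z z' -> opt R' z z'.
Proof. by move=> sub_R [->|/sub_R]; [left|right]. Qed.

Definition two_edits := rcomp (opt single_edit) (opt single_edit).

Lemma two_edits_sym z z' : two_edits z z' -> two_edits z' z.
Proof. by case=> y [e1 e2]; exists y; split; apply: opt_sym single_edit_sym _. Qed.

Lemma close_edit_two_edits z z' : close_edit z z' -> two_edits z z'.
Proof.
by case=> [|[|[|]]] [y [e1 e2]]; exists y;
  (split; [move: e1|move: e2]); apply: opt_sub => x x'; rewrite /single_edit; tauto.
Qed.

Definition swap_at i (z : seq bool) :=
  take i z ++ [:: nth false z i.+1; nth false z i] ++ drop i.+2 z.
Definition flip_at i (z : seq bool) := set_nth false z i (~~ nth false z i).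
Definition delete_at i (z : seq bool) := take i z ++ drop i.+1 z.
Definition insert_at i b (z : seq bool) := take i z ++ b :: drop i z.

Definition edits1 (z : seq bool) : seq (seq bool) :=
  z :: [seq swap_at i z | i <- iota 0 (size z)] ++ [seq flip_at i z | i <- iota 0 (size z)]
    ++ [seq delete_at i z | i <- iota 0 (size z)]
    ++ [seq insert_at i b z | i <- iota 0 (size z).+1, b <- [:: true; false]].

Lemma mem_edits1 z z' : opt single_edit z z' -> z' \in edits1 z.
Proof.
case=> [->|e]; first exact: mem_head.
rewrite inE 3!mem_cat; apply/orP; right; apply/or4P.
case: e => [[i [lt_i ->]]|[[i [lt_i ->]]|[[i [lt_i ->]]|[i [b [le_i ->]]]]]].
- by apply: Or41; rewrite (map_f (swap_at^~ z)) // mem_iota add0n (ltnW lt_i).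
- by apply: Or42; rewrite (map_f (flip_at^~ z)) // mem_iota add0n lt_i.
- by apply: Or43; rewrite (map_f (delete_at^~ z)) // mem_iota add0n lt_i.
- by apply: Or44; apply/allpairsP; exists (i, b); rewrite mem_iota add0n ltnS le_i; case: b.
Qed.

Lemma size_edits1 z : size (edits1 z) = 5 * size z + 3.
Proof. by rewrite /edits1 -cat1s 4!size_cat size_allpairs !size_map !size_iota /=; lia. Qed.

Lemma size_swap_at i z : i < size z -> size (swap_at i z) <= (size z).+1.
Proof. by rewrite /swap_at !size_cat size_take_min size_drop /=; lia. Qed.

Lemma size_flip_at i z : i < size z -> size (flip_at i z) = size z.
Proof. by rewrite /flip_at size_set_nth; lia. Qed.

Lemma size_delete_at i z : size (delete_at i z) <= size z.
Proof. by rewrite /delete_at size_cat size_take_min size_drop; lia. Qed.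

Lemma size_insert_at i b z : i <= size z -> size (insert_at i b z) = (size z).+1.
Proof. by rewrite /insert_at size_cat size_take_min /= size_drop; lia. Qed.

Lemma size_mem_edits1 z y : y \in edits1 z -> size y <= (size z).+1.
Proof.
rewrite inE 3!mem_cat => /orP[/eqP->//|].
case/or4P=> [/mapP[i lt_i ->]|/mapP[i lt_i ->]|/mapP[i lt_i ->]|
            /allpairsP[[i b] [lt_i _ ->]]]; move: lt_i; rewrite mem_iota => /andP[_ lt_i].
- exact: size_swap_at.
- by rewrite size_flip_at.
- exact: leq_trans (size_delete_at i z) _.
- by rewrite size_insert_at.
Qed.

Lemma size_flatten_map_leq (S U : eqType) (f : S -> seq U) (s : seq S) B :
  (forall y, y \in s -> size (f y) <= B) -> size (flatten (map f s)) <= size s * B.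
Proof.
elim: s => [|x s IHs] //= le_B; rewrite size_cat mulSn leq_add ?le_B ?mem_head //.
by apply: IHs => y s_y; rewrite le_B // inE s_y orbT.
Qed.

Definition edits2 (z : seq bool) : seq (seq bool) := flatten (map edits1 (edits1 z)).

Lemma mem_edits2 z z' : two_edits z z' -> z' \in edits2 z.
Proof. by case=> y [e1 e2]; apply/flatten_mapP; exists y; apply: mem_edits1. Qed.

Lemma size_edits2 z : size (edits2 z) <= (5 * size z + 3) * (5 * size z + 8).
Proof.
rewrite -size_edits1; apply: size_flatten_map_leq => y /size_mem_edits1 le_y.
by rewrite size_edits1 -[8]/(5 + 3) addnA -mulnSr leq_add2r leq_mul2l le_y orbT.
Qed.

Lemma exists_ord_notin m (s : seq 'I_m) : size s < m -> exists i : 'I_m, i \notin s.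
Proof.
move=> lt_s; apply/existsP; apply: contraTT lt_s => /existsPn s_all.
rewrite -leqNgt -{1}(card_ord m) (leq_trans _ (card_size s)) //.
by apply/subset_leq_card/subsetP => i _; apply/negbNE/s_all.
Qed.

Lemma greedy_coloring (T : eqType) (adj : T -> T -> Prop) (N : T -> seq T) m (S : seq T) :
  0 < m ->
  (forall x y, x \in S -> adj x y \/ adj y x -> y \in N x) ->
  (forall x, x \in S -> size (N x) < m) ->
  exists c : T -> 'I_m, forall z z', z \in S -> z' \in S -> z' <> z -> adj z z' -> c z <> c z'.
Proof.
move=> m_gt0; elim: S => [|x S IHS] N_adj N_small; first by exists (fun _ => Ordinal m_gt0).
have [c c_ok] : exists c : T -> 'I_m,
    forall z z', z \in S -> z' \in S -> z' <> z -> adj z z' -> c z <> c z'.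
  by apply: IHS => [y w S_y|y S_y]; [apply: N_adj|apply: N_small]; rewrite inE S_y orbT.
have [col col_fresh] : exists col : 'I_m, col \notin map c (N x).
  by apply: exists_ord_notin; rewrite size_map N_small ?mem_head.
have col_ok w : adj x w \/ adj w x -> c w <> col.
  by move=> /(N_adj x w (mem_head _ _)) N_w c_w; rewrite -c_w map_f in col_fresh.
exists (fun z => if z == x then col else c z) => z z' S_z S_z' z'_neq_z adj_zz'.
case: (eqVneq z x) => [z_x|z_neq_x]; case: (eqVneq z' x) => [z'_x|z'_neq_x].
- by case: z'_neq_z; rewrite z_x z'_x.
- by apply/nesym/col_ok; left; rewrite -z_x.
- by apply: col_ok; right; rewrite -z'_x.
- move: S_z S_z'; rewrite !inE (negbTE z_neq_x) (negbTE z'_neq_x) /= => S_z S_z'.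
  exact: c_ok.
Qed.

Fixpoint seqs_upto (T : finType) n : seq (seq T) :=
  if n is n'.+1 then [::] :: [seq x :: s | x <- enum T, s <- seqs_upto T n'] else [:: [::]].

Lemma mem_seqs_upto (T : finType) n (s : seq T) : (s \in seqs_upto T n) = (size s <= n).
Proof.
elim: n s => [|n IHn] [|x s] //=; rewrite in_cons /= ltnS -IHn.
apply/allpairsP/idP => [[[y t] /= [_ t_in [_ ->]]] //|s_in].
by exists (x, s); rewrite mem_enum.
Qed.

Lemma two_edits_degree_lt D s :
  50 <= D -> s <= 3 * D -> (5 * s + 3) * (5 * s + 8) < 1000 * D ^ 2.
Proof.
move=> D_ge50 le_s; apply: (@leq_ltn_trans ((15 * D + 3) * (15 * D + 8))).
  by apply: leq_mul; lia.
nia.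
Qed.

Theorem lemma7 (n k : nat) (hn : n = 2 ^ k) :
  let Delta := 50 + 1000 * k in
  let m := 1000 * Delta ^ 2 in
  exists h : seq bool -> 'I_m,
    forall z z' : seq bool,
      size z <= 3 * Delta -> size z' <= 3 * Delta ->
      z' <> z -> close_edit z z' -> h z <> h z'.
Proof.
move=> Delta m.
have m_gt0 : 0 < m by rewrite muln_gt0 expn_gt0 addn_gt0.
have [z z' _|z|h h_ok] := greedy_coloring (adj := close_edit) (N := edits2) m_gt0
  (S := seqs_upto bool (3 * Delta)).
- case=> [/close_edit_two_edits|/close_edit_two_edits/two_edits_sym]; exact: mem_edits2.
- rewrite mem_seqs_upto => short_z.
  exact: leq_ltn_trans (size_edits2 z) (two_edits_degree_lt (leq_addr _ _) short_z).
by exists h => z z' short_z short_z'; apply: h_ok; rewrite mem_seqs_upto.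
Qed.
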